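(* Let $1\le a\le\sqrt3$, $c(a)=\frac98\left(a+\frac1a\right)$, and for $K> c(a)^2/9$ put $\alpha=\frac12\left(3-3a^2+\sqrt{9a^4-4c(a)a^3+4Ka^2}\right)$, $\beta=\frac12\left(3-3a^2-\sqrt{9a^4-4c(a)a^3+4Ka^2}\right)$, $\gamma=\sqrt{Ka^2-c(a)a+9/4}$, and $$T(K,a)=\int_\alpha^\gamma\frac{4a\,ds}{\sqrt{(s-\alpha)(s-\beta)}\sqrt{\gamma^2-s^2}}.$$ Then $\lim_{K\to\infty}T(K,a)=0$.
   Context: $T(K,a)$ is the period of the closed solutions of the Lie–Poisson equation for chains on $\mathrm{SU}(2)$ with left-invariant CR structure parameter $a$ lying on the sphere of radius $\sqrt K$; here it is given by the explicit integral above. *)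

From HB Require Import structures.
From mathcomp Require Import all_boot all_order all_algebra.
From mathcomp Require Import all_classical all_reals all_analysis.
Set Implicit Arguments. Unset Strict Implicit. Unset Printing Implicit Defensive.
Import Order.TTheory GRing.Theory Num.Theory.
Import numFieldNormedType.Exports.
Local Open Scope classical_set_scope.
Local Open Scope ring_scope.

Definition cA {R : realType} (a : R) : R := 9 / 8 * (a + a^-1).

Definition discr {R : realType} (K a : R) : R :=
  9 * a ^+ 4 - 4 * cA a * a ^+ 3 + 4 * K * a ^+ 2.

Definition alphaK {R : realType} (K a : R) : R :=
  (3 - 3 * a ^+ 2 + Num.sqrt (discr K a)) / 2.

Definition betaK {R : realType} (K a : R) : R :=
  (3 - 3 * a ^+ 2 - Num.sqrt (discr K a)) / 2.

Definition gammaK {R : realType} (K a : R) : R :=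
  Num.sqrt (K * a ^+ 2 - cA a * a + 9 / 4).

Definition integrandT {R : realType} (K a s : R) : R :=
  4 * a / (Num.sqrt ((s - alphaK K a) * (s - betaK K a))
           * Num.sqrt (gammaK K a ^+ 2 - s ^+ 2)).

(* The period T(K,a), as a (possibly improper) Lebesgue integral of the
   nonnegative integrand over [alpha, gamma], valued in the extended reals. *)
Definition periodT {R : realType} (K a : R) : \bar R :=
  (\int[@lebesgue_measure R]_(s in `[alphaK K a, gammaK K a]) (integrandT K a s)%:E)%E.

(* For K large, the factor (s - beta) (gamma + s) of the denominator is at least K on
   [alpha, gamma], so the integrand is at most (4 a / sqrt K) / sqrt ((s - alpha) (gamma - s)).
   This arcsine density has primitive asin ((2 s - alpha - gamma) / (gamma - alpha)), so its
   (improper) integral over [alpha, gamma] is at most pi.  Hence 0 <= T(K, a) <= 4 a pi / sqrt K. *)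

From HB Require Import structures.
From mathcomp Require Import all_boot all_order all_algebra.
From mathcomp Require Import all_classical all_reals all_analysis.
From mathcomp Require Import measurable_realfun.
From mathcomp Require Import ring lra.
Import Order.TTheory GRing.Theory Num.Theory.
Import numFieldNormedType.Exports.
Local Open Scope classical_set_scope.
Local Open Scope ring_scope.

(* The integral of a nonnegative function is a supremum over the simple functions below
   it, so monotonicity needs no measurability. *)
Lemma ge0_le_integral_nonmeasurable d (T : measurableType d) (R : realType)
    (mu : {measure set T -> \bar R}) (D : set T) (f g : T -> \bar R) :
  (forall x, D x -> (0 <= f x)%E) -> (forall x, D x -> (f x <= g x)%E) ->
  (\int[mu]_(x in D) f x <= \int[mu]_(x in D) g x)%E.
Proof.
move=> f0 fg.
have g0 x : D x -> (0 <= g x)%E by move=> Dx; exact: le_trans (f0 _ Dx) (fg _ Dx).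
rewrite (ge0_integralE _ f0) (ge0_integralE _ g0) /=.
apply: ereal_sup_le => _ [h hf <-]; exists h => //= x.
apply: le_trans (hf x) _; rewrite /patch; case: ifP => // /set_mem; exact: fg.
Qed.

(* Monotone convergence along the truncations of [f] to [u + e n, v - e n]; since [f]
   vanishes at [u] and [v], they converge to [f] on all of [u, v]. *)
Section integral_itv_le_inner.
Context (R : realType) (u v : R) (B : \bar R) (f : R -> R).
Hypothesis uv : u < v.
Hypothesis f_ge0 : {in `]u, v[, forall x, 0 <= f x}.
Hypothesis f_cont : {in `]u, v[, continuous f}.
Hypotheses (fu : f u = 0) (fv : f v = 0).
Hypothesis f_inner : forall p q, u < p -> p < q -> q < v ->
  (\int[lebesgue_measure]_(x in `[p, q]) (f x)%:E <= B)%E.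

Let e n : R := (v - u) / 3 * harmonic n.
Let inner n : set R := `[u + e n, v - e n].
Let g n : R -> \bar R := (EFin \o f) \_ (inner n).

Let e_gt0 n : 0 < e n.
Proof. by rewrite mulr_gt0 ?harmonic_gt0 ?divr_gt0 ?subr_gt0. Qed.

Let e_lt n : 2 * e n < v - u.
Proof.
have h1 : harmonic n <= 1 :> R by rewrite /= invf_le1 ?ler1n ?ltr0n.
have w0 : 0 < v - u by rewrite subr_gt0.
rewrite /e; nra.
Qed.

Let e_noninc m n : (m <= n)%N -> e n <= e m.
Proof.
move=> mn; rewrite /e ler_pM2l /=; last by apply: divr_gt0; rewrite ?subr_gt0.
by rewrite lef_pV2 ?posrE ?ltr0n // ler_nat ltnS.
Qed.

Let e_small (d : R) : 0 < d -> \forall n \near \oo, e n < d.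
Proof.
apply: cvgr_lt; rewrite -[0](mulr0 ((v - u) / 3)).
exact: cvgMr cvg_harmonic.
Qed.

Let inner_sub n : inner n `<=` `]u, v[.
Proof.
move=> x; rewrite /inner /= !in_itv /= => /andP[h1 h2].
have e0 := e_gt0 n; apply/andP; split; lra.
Qed.

Let inner_nd m n : (m <= n)%N -> inner m `<=` inner n.
Proof.
move=> mn x; rewrite /inner /= !in_itv /= => /andP[h1 h2].
have e_mn := e_noninc _ _ mn; apply/andP; split; lra.
Qed.

Let g_ge0 n x : (0 <= g n x)%E.
Proof.
rewrite /g /patch; case: ifPn => // /set_mem /inner_sub xuv.
by rewrite lee_fin f_ge0 // inE.
Qed.

Let g_measurable n : measurable_fun `[u, v] (g n).
Proof.
apply: (measurable_restrict (EFin \o f) (measurable_itv _) (measurable_itv _)).1.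
rewrite setIidr; last by move=> x /inner_sub; exact: subset_itv_oo_cc.
apply/measurable_EFinP; apply: subspace_continuous_measurable_fun => //.
apply: continuous_in_subspaceT => x /set_mem /inner_sub xuv.
by apply: f_cont; rewrite inE.
Qed.

Let g_nd x : nondecreasing_seq (g^~ x).
Proof.
move=> m n mn; rewrite {1}/g /patch; case: ifPn => [/set_mem xm|_]; last exact: g_ge0.
by rewrite /g /patch ifT //; exact/mem_set/(inner_nd _ _ mn).
Qed.

Let g_lim x : x \in `[u, v] -> limn (g^~ x) = (f x)%:E.
Proof.
rewrite /= in_itv /= => /andP[ux xv]; apply: cvg_lim => //.
have [/andP[ux' xv']|] := boolP ((u < x) && (x < v)).
  have d0 : 0 < Num.min (x - u) (v - x) by rewrite lt_min !subr_gt0 ux' xv'.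
  apply: cvg_near_cst; near=> n.
  have /andP[h1 h2] : (e n < x - u) && (e n < v - x).
    by rewrite -lt_min; near: n; exact: e_small.
  rewrite /g /patch ifT //; apply/mem_set; rewrite /inner /= in_itv /=; apply/andP; split; lra.
rewrite negb_and -!leNgt => x_end.
have -> : f x = 0.
  have [->|->] // : x = u \/ x = v.
  by case/orP: x_end => ?; [left|right]; apply/le_anti/andP.
apply: cvg_near_cst; near=> n; rewrite /g /patch ifF //; apply/negbTE/negP.
move=> /set_mem /inner_sub; rewrite /= in_itv /=; case/orP: x_end => ? /andP[]; lra.
Unshelve. all: by end_near.
Qed.

Lemma integral_itv_le_inner :
  (\int[lebesgue_measure]_(x in `[u, v]) (f x)%:E <= B)%E.
Proof.
have -> : (\int[lebesgue_measure]_(x in `[u, v]) (f x)%:E =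
           \int[lebesgue_measure]_(x in `[u, v]) limn (g^~ x))%E.
  by apply: eq_integral => x /set_mem /g_lim.
rewrite monotone_convergence //.
apply: lime_le.
  apply: ereal_nondecreasing_is_cvgn => m n mn.
  by apply: ge0_le_integral => // [||x _]; [exact: g_measurable.. | exact: g_nd].
apply: nearW => n; rewrite /g -integral_mkcondr setIidr; last first.
  by move=> x /inner_sub; exact: subset_itv_oo_cc.
by apply: f_inner; have := e_gt0 n; have := e_lt n; lra.
Qed.

End integral_itv_le_inner.

Section arcsine_kernel.
Context {R : realType}.
Implicit Types (u v x M : R).

(* Vanishes at the endpoints and outside [u, v], where [Num.sqrt] returns 0 and [0^-1 = 0]. *)
Definition arcsine_kernel u v x : R := (Num.sqrt ((x - u) * (v - x)))^-1.

Definition arcsine_primitive u v x : R := asin ((2 * x - u - v) / (v - u)).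

Lemma arcsine_kernel_ge0 u v x : 0 <= arcsine_kernel u v x.
Proof. by rewrite invr_ge0 sqrtr_ge0. Qed.

Lemma arcsine_kernel_left u v : arcsine_kernel u v u = 0.
Proof. by rewrite /arcsine_kernel subrr mul0r sqrtr0 invr0. Qed.

Lemma arcsine_kernel_right u v : arcsine_kernel u v v = 0.
Proof. by rewrite /arcsine_kernel subrr mulr0 sqrtr0 invr0. Qed.

Lemma arcsine_kernel_continuous u v : {in `]u, v[, continuous (arcsine_kernel u v)}.
Proof.
move=> x; rewrite in_itv /= => /andP[ux xv].
apply: (@continuousV _ _ (fun y => Num.sqrt ((y - u) * (v - y)))).
  by rewrite gt_eqF // sqrtr_gt0 mulr_gt0 ?subr_gt0.
apply: (@continuous_comp _ _ _ (fun y => (y - u) * (v - y)) Num.sqrt); last first.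
  exact: sqrt_continuous.
by apply: continuousM; apply: continuousB;
  [exact: cvg_id | exact: cvg_cst | exact: cvg_cst | exact: cvg_id].
Qed.

Lemma is_derive_arcsine_primitive u v x : u < x < v ->
  is_derive x 1 (arcsine_primitive u v) (arcsine_kernel u v x).
Proof.
move=> /andP[ux xv]; have w0 : 0 < v - u by rewrite subr_gt0; exact: lt_trans xv.
have wn0 : v - u != 0 by rewrite gt_eqF.
set phi := fun y => (2 * y - u - v) / (v - u).
have dphi : is_derive x 1 phi (2 / (v - u)).
  rewrite /phi; apply: is_derive_eq.
  by rewrite !scaler0 add0r !subr0 scalerA [_ *: 1]mulr1 mulrC.
have phix : -1 < phi x < 1.
  by rewrite /phi ltr_pdivlMr // ltr_pdivrMr //; apply/andP; split; lra.
have -> : arcsine_primitive u v = asin \o phi by [].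
apply: is_derive_eq (is_derive1_comp (is_derive1_asin phix) dphi) _.
have P0 : 0 < (x - u) * (v - x) by apply: mulr_gt0; rewrite subr_gt0.
have -> : 1 - phi x ^+ 2 = (2 / (v - u)) ^+ 2 * ((x - u) * (v - x)) by rewrite /phi; field.
rewrite sqrtrM ?sqr_ge0 // sqrtr_sqr gtr0_norm ?divr_gt0 // /arcsine_kernel.
by field; rewrite gt_eqF ?sqrtr_gt0.
Qed.

Lemma arcsine_primitive_bounds u v x : u < v -> u <= x <= v ->
  - (pi / 2) <= arcsine_primitive u v x <= pi / 2.
Proof.
move=> uv /andP[ux xv]; have w0 : 0 < v - u by rewrite subr_gt0.
have phix : -1 <= (2 * x - u - v) / (v - u) <= 1.
  by rewrite ler_pdivlMr // ler_pdivrMr //; apply/andP; split; lra.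
by rewrite asin_geNpi2 ?asin_lepi2.
Qed.

Lemma integral_arcsine_kernel_inner_le M u v p q : 0 <= M ->
  u < p -> p < q -> q < v ->
  (\int[lebesgue_measure]_(x in `[p, q]) (M * arcsine_kernel u v x)%:E <= (M * pi)%:E)%E.
Proof.
move=> M0 up pq qv; have uv : u < v by apply: lt_trans up (lt_trans pq qv).
have inside y : p <= y <= q -> u < y < v.
  by case/andP=> py yq; apply/andP; split; [exact: lt_le_trans py|exact: le_lt_trans qv].
set F := fun z => M * arcsine_primitive u v z.
have dF y : u < y < v -> is_derive y 1 F (M * arcsine_kernel u v y).
  by move=> uyv; apply: is_deriveZ; exact: is_derive_arcsine_primitive.
have F_cont y : u < y < v -> {for y, continuous F}.
  move=> /dF dFy; apply/differentiable_continuous/derivable1_diffP.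
  exact: (@ex_derive _ _ _ _ _ _ _ dFy).
rewrite (@continuous_FTC2 R _ F p q pq).
- rewrite -EFinB lee_fin -mulrBr ler_wpM2l //.
  have /andP[? ?] : - (pi / 2) <= arcsine_primitive u v p <= pi / 2.
    by apply: arcsine_primitive_bounds; rewrite // (ltW up) (ltW (lt_trans pq qv)).
  have /andP[? ?] : - (pi / 2) <= arcsine_primitive u v q <= pi / 2.
    by apply: arcsine_primitive_bounds; rewrite // (ltW qv) (ltW (lt_trans up pq)).
  lra.
- apply: continuous_in_subspaceT => y /set_mem /= /inside /andP[uy yv].
  apply: continuousM; first exact: cvg_cst.
  by apply: arcsine_kernel_continuous; rewrite in_itv /= uy.
- split.
  + move=> y /[!in_itv] /= /andP[py yq].
    by apply: (@ex_derive _ _ _ _ _ _ _ (dF y _)); apply: inside; rewrite !ltW.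
  + by apply: cvg_at_right_filter; apply: F_cont; rewrite inside // lexx ltW.
  + by apply: cvg_at_left_filter; apply: F_cont; rewrite inside // lexx ltW.
- move=> y /[!in_itv] /= /andP[py yq]; rewrite derive1E.
  by apply: derive_val; apply: dF; rewrite inside // !ltW.
Qed.

Lemma integral_arcsine_kernel_le u v M : 0 <= M ->
  (\int[lebesgue_measure]_(x in `[u, v]) (M * arcsine_kernel u v x)%:E <= (M * pi)%:E)%E.
Proof.
move=> M0; have Mpi0 : (0 <= (M * pi)%:E)%E by rewrite lee_fin mulr_ge0 // pi_ge0.
have [uv|] := ltP u v.
  apply: integral_itv_le_inner => //.
  - by move=> x _; rewrite mulr_ge0 // arcsine_kernel_ge0.
  - by move=> x uxv; apply: continuousM; [exact: cvg_cst | exact: arcsine_kernel_continuous].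
  - by rewrite arcsine_kernel_left mulr0.
  - by rewrite arcsine_kernel_right mulr0.
  - by move=> p q; exact: integral_arcsine_kernel_inner_le.
rewrite le_eqVlt => /predU1P[->|vu]; first by rewrite set_itv1 integral_set1.
by rewrite set_itv_ge ?integral_set0 // bnd_simp -ltNge.
Qed.

End arcsine_kernel.

Lemma le_div_sqrt_arcsine_kernel {R : realType} (c alpha beta gamma s L : R) :
  0 <= c -> 0 < L -> 0 <= alpha <= s -> s <= gamma ->
  L <= (s - beta) * (gamma + s) ->
  c / (Num.sqrt ((s - alpha) * (s - beta)) * Num.sqrt (gamma ^+ 2 - s ^+ 2))
    <= c / Num.sqrt L * arcsine_kernel alpha gamma s.
Proof.
move=> c0 L0 /andP[alpha0 als] sga Q_ge.
have sbe : 0 < s - beta by nra.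
set P := (s - alpha) * (gamma - s); set Q := (s - beta) * (gamma + s).
have P0 : 0 <= P by rewrite mulr_ge0 // subr_ge0.
rewrite -sqrtrM; last by apply: mulr_ge0; lra.
have -> : (s - alpha) * (s - beta) * (gamma ^+ 2 - s ^+ 2) = P * Q by rewrite /P /Q; ring.
rewrite sqrtrM // /arcsine_kernel -/P invfM mulrA [c / _ * _]mulrAC.
rewrite ler_wpM2r ?invr_ge0 ?sqrtr_ge0 // ler_wpM2l //.
by rewrite lef_pV2 ?posrE ?sqrtr_gt0 ?(lt_le_trans L0) // ler_sqrt // (le_trans (ltW L0)).
Qed.

Lemma integrandT_ge0 {R : realType} (K a s : R) : 0 <= a -> 0 <= integrandT K a s.
Proof. by move=> a0; rewrite divr_ge0 ?mulr_ge0 ?sqrtr_ge0. Qed.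

Section large_K.
Context (R : realType) (a K : R).
Hypotheses (a_ge1 : 1 <= a) (K_ge : 9 * a ^+ 4 <= K).

Let a_gt0 : 0 < a. Proof. exact: lt_le_trans ltr01 a_ge1. Qed.
Let a2_ge1 : 1 <= a ^+ 2. Proof. by rewrite exprn_ege1. Qed.
Let K_gt0 : 0 < K. Proof. by apply: lt_le_trans K_ge; rewrite mulr_gt0 // exprn_gt0. Qed.
Let K_ge9 : 9 <= K. Proof. by apply: le_trans K_ge; rewrite ler_peMr // exprn_ege1. Qed.
Let sqrtK_sqr : Num.sqrt K ^+ 2 = K. Proof. exact/sqr_sqrtr/ltW. Qed.

Lemma sqrt_le_sqrt_discr : 2 * Num.sqrt K <= Num.sqrt (discr K a).
Proof.
have discrE : discr K a = 4 * K + a ^+ 2 * (9 / 2 * (a ^+ 2 - 1)) + (a ^+ 2 - 1) * 4 * K.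
  by rewrite /discr /cA; field; rewrite gt_eqF.
have D_ge : 4 * K <= discr K a.
  by rewrite discrE; have := a2_ge1; have := K_gt0; nra.
have := sqr_sqrtr (le_trans (ltW (mulr_gt0 _ K_gt0)) D_ge).
have := sqrtr_ge0 (discr K a); have := sqrtr_ge0 K; have := sqrtK_sqr; nra.
Qed.

Lemma sqrt_le_gammaK : Num.sqrt K <= gammaK K a.
Proof.
rewrite /gammaK; have -> : K * a ^+ 2 - cA a * a + 9 / 4 = K + (a ^+ 2 - 1) * (K - 9 / 8).
  by rewrite /cA; field; rewrite gt_eqF.
have le_K : K <= K + (a ^+ 2 - 1) * (K - 9 / 8).
  by have := a2_ge1; have := K_ge9; nra.
by rewrite ler_sqrt // (le_trans (ltW K_gt0)).
Qed.

Let sqrtK_ge : 3 * a ^+ 2 <= Num.sqrt K.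
Proof.
have a4 : a ^+ 4 = (a ^+ 2) ^+ 2 by rewrite -exprM.
have := K_ge; rewrite a4 => K_ge'.
by have := sqrtr_ge0 K; have := sqrtK_sqr; have := a2_ge1; nra.
Qed.

Lemma alphaK_ge0 : 0 <= alphaK K a.
Proof.
rewrite /alphaK; have := sqrt_le_sqrt_discr; have := sqrtK_ge; have := a2_ge1.
lra.
Qed.

Lemma le_integrandT_denominator s : alphaK K a <= s <= gammaK K a ->
  K <= (s - betaK K a) * (gammaK K a + s).
Proof.
move=> /andP[als sga].
have beE : s - betaK K a = s - alphaK K a + Num.sqrt (discr K a).
  by rewrite /betaK /alphaK; field.
have := sqrt_le_sqrt_discr; have := sqrt_le_gammaK; have := alphaK_ge0.
have := sqrtr_ge0 K; have := sqrtK_sqr; rewrite beE; nra.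
Qed.

Lemma integrandT_le_arcsine_kernel s : alphaK K a <= s <= gammaK K a ->
  integrandT K a s <= 4 * a / Num.sqrt K * arcsine_kernel (alphaK K a) (gammaK K a) s.
Proof.
move=> /andP[als sga]; apply: le_div_sqrt_arcsine_kernel => //.
- by rewrite mulr_ge0 // ltW.
- by rewrite alphaK_ge0 als.
- by apply: le_integrandT_denominator; rewrite als sga.
Qed.

Lemma periodT_le : (periodT K a <= (4 * a * pi / Num.sqrt K)%:E)%E.
Proof.
have M0 : 0 <= 4 * a / Num.sqrt K by rewrite divr_ge0 ?sqrtr_ge0 // mulr_ge0 // ltW.
rewrite /periodT mulrAC.
apply: le_trans _ (integral_arcsine_kernel_le _ _ _ M0).
apply: ge0_le_integral_nonmeasurable => s; rewrite /= in_itv /= => sI.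
  by rewrite lee_fin integrandT_ge0 // ltW.
by rewrite lee_fin integrandT_le_arcsine_kernel.
Qed.

End large_K.

Lemma cvg_div_sqrt_pinfty {R : realType} (c : R) : c / Num.sqrt x @[x --> +oo] --> 0.
Proof.
apply/cvgrPdist_lt => e e0; near=> x.
have x_gt : (`|c| / e) ^+ 2 < x by near: x; apply: nbhs_pinfty_gt; rewrite num_real.
have ce0 : 0 <= `|c| / e by rewrite divr_ge0 // ltW.
have sx : `|c| / e < Num.sqrt x.
  by rewrite -[ltLHS]ger0_norm // -sqrtr_sqr ltr_sqrt // (le_lt_trans (sqr_ge0 _) x_gt).
have sx0 : 0 < Num.sqrt x by apply: le_lt_trans sx.
rewrite sub0r normrN normrM normfV (ger0_norm (sqrtr_ge0 x)) ltr_pdivrMr //.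
by rewrite -ltr_pdivrMl // mulrC.
Unshelve. all: by end_near.
Qed.

Theorem mainTheorem6 (R : realType) (a : R) :
  1 <= a <= Num.sqrt 3 ->
  periodT K a @[K --> +oo] --> 0%E.
Proof.
move=> /andP[a_ge1 _].
apply: (@squeeze_cvge _ _ _ _ (cst 0%E) _ (fun K => (4 * a * pi / Num.sqrt K)%:E)).
- near=> K; apply/andP; split.
    by apply: integral_ge0 => s _; rewrite lee_fin integrandT_ge0 // (le_trans ler01).
  apply: periodT_le => //; near: K; apply: nbhs_pinfty_ge; rewrite num_real.
- exact: cvg_cst.
- by apply: cvg_EFin; [exact: nearW | exact: cvg_div_sqrt_pinfty].
Unshelve. all: by end_near.
Qed.
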